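(* Let $\Gamma$ be a gain operator on $\ell^\infty_+(\mathcal I)$ and assume: (i) there is a subset $A\subset\Psi(\Gamma)$ which is weakly$^*$ closed, forward-invariant ($\Gamma(A)\subset A$), cofinal and coercive; (ii) $\Sigma(\Gamma)$ is GATT; (iii) Assumption A holds and $\mathcal N^+_i(1)\setminus\{i\}\ne\emptyset$ for all $i\in\mathcal I$. Then there exists $s^0\in\mathrm{int}(\ell^\infty_+(\mathcal I))\cap\Psi(\Gamma)$ admitting a complete orbit $\{s^n:n\in\mathbb Z\}$ (i.e. $s^{n+1}=\Gamma(s^n)$ for all $n\in\mathbb Z$) such that the path obtained by linear interpolation between the points $s^n$ is a $C^0$-path of decay for $\Gamma$.
   Context: Let $\mathcal I$ be a nonempty countable index set; $\ell^\infty_+(\mathcal I)$ is the cone of nonnegative real families $s=(s_i)_{i\in\mathcal I}$ with $\|s\|:=\sup_i|s_i|<\infty$, ordered componentwise; its interior is $\mathrm{int}(\ell^\infty_+(\mathcal I))=\{s:\inf_i s_i>0\}$; $\mathbf 1$ is the all-ones vector. The weak$^*$-topology is that of $\ell^\infty(\mathcal I)=(\ell^1(\mathcal I))^*$. $\mathcal K_\infty$: continuous strictly increasing unbounded $\gamma:\mathbb R_+\to\mathbb R_+$ with $\gamma(0)=0$. For $\mathcal J\subset\mathcal I$, $s_{|\mathcal J}$ agrees with $s$ on $\mathcal J$ and is $0$ elsewhere. Gain operator: for each $i$ a finite (possibly empty) $\mathcal I_i\subset\mathcal I\setminus\{i\}$; directed graph $\mathcal G$ with vertices $\mathcal I$ and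 edges $ji$, $j\in\mathcal I_i$; a pointwise equicontinuous family $\gamma_{ij}\in\mathcal K_\infty$ ($ji\in E(\mathcal G)$); functions $\mu_i:\ell^\infty_+(\mathcal I)\to[0,\infty]$ with (M1) some $\xi\in\mathcal K_\infty$ has $\mu_i(0)=0$, $\mu_i(s)\ge\xi(\|s\|)$; (M2) $\mu_i$ monotone; (M3) for each finite $\mathcal J$, $\mu_i$ restricted to vectors vanishing off $\mathcal J$ is finite-valued and continuous; (M4) for each norm-bounded $A$ and $\varepsilon>0$ there is $\delta>0$ with $\sup_i|\mu_i(s_{|\mathcal I_i})-\mu_i(s^0_{|\mathcal I_i})|\le\varepsilon$ whenever $s^0\in A$, $\|s-s^0\|\le\delta$. $\Gamma_i(s):=\mu_i([\gamma_{ij}(s_j)]_{j\in\mathcal I_i})$ (argument zero outside $\mathcal I_i$). Assumption A: there is $\eta\in\mathcal K_\infty$ with $\gamma_{ij}\ge\eta$ for all $ji\in E(\mathcal G)$, and $\mathcal I_i\ne\emptyset$ for all $i$. $\mathcal N^+_i(1)$ is the set of vertices $j$ reachable from $i$ by a directed path of length at most $1$ (i.e. $\{i\}\cup\{j: i\in\mathcal I_j\}$). $\Psi(\Gamma):=\{s:\Gamma(s)\le s\}$; $\Sigma(\Gamma)$ is the system $s^{n+1}=\Gamma(s^n)$, GATT if $\|\Gamma^n(s)\|\to0$ for all $s$. $A$ is cofinal if every $s$ has $\hat s\in A$ with $s\le\hat s$; coercive if $s\ge\underline\varphi(\|s\|)\mathbf 1$ for all $s\in A$ and some $\underline\varphi\in\mathcal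 K_\infty$. A $C^0$-path of decay for $\Gamma$ is a path $\sigma:\mathbb R_+\to\ell^\infty_+(\mathcal I)$ with $\sigma(r)\in\Psi(\Gamma)$ for all $r$, $\varphi_{\min}(r)\mathbf 1\le\sigma(r)\le\varphi_{\max}(r)\mathbf 1$ for some $\varphi_{\min},\varphi_{\max}\in\mathcal K_\infty$, increasing and norm-continuous. *)

From HB Require Import structures.
From mathcomp Require Import all_boot all_order all_algebra.
From mathcomp Require Import all_classical all_reals all_analysis.
Set Implicit Arguments. Unset Strict Implicit. Unset Printing Implicit Defensive.
Import Order.TTheory GRing.Theory Num.Theory.
Import numFieldNormedType.Exports.
Local Open Scope classical_set_scope.
Local Open Scope ring_scope.

Section Defs.
Variables (R : realType) (I : countType).

Definition bounded_fam (s : I -> R) := exists M : R, forall i, `|s i| <= M.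
Definition linf_plus (s : I -> R) := (forall i, 0 <= s i) /\ bounded_fam s.

Definition linf_norm (s : I -> R) : R := sup [set `|s i| | i in [set: I]].

Definition int_linf_plus (s : I -> R) :=
  linf_plus s /\ exists c : R, 0 < c /\ forall i, c <= s i.

Definition ones : I -> R := fun _ => 1.

Definition fle (s t : I -> R) := forall i, s i <= t i.

Definition restr (s : I -> R) (J : set I) : I -> R :=
  fun i => if i \in J then s i else 0.

Definition l1 (y : I -> R) := summable [set: I] (fun i => (y i)%:E).
Definition lsum (f : I -> R) : R :=
  fine (\esum_(i in [set: I]) (Num.max (f i) 0)%:E)
  - fine (\esum_(i in [set: I]) (Num.max (- f i) 0)%:E).
Definition pairing (s y : I -> R) : R := lsum (fun i => s i * y i).

(* weak^*-closed subsets of ell^infty(I) = (ell^1(I))^* : the complement is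
   open for the topology generated by the functionals s |-> <s, y>, y in ell^1 *)
Definition weakstar_closed (A : set (I -> R)) :=
  A `<=` bounded_fam /\
  forall s, bounded_fam s -> ~ A s ->
    exists (ys : seq (I -> R)) (e : R), 0 < e /\ (forall y, y \in ys -> l1 y) /\
      forall t, bounded_fam t ->
        (forall y, y \in ys -> `|pairing t y - pairing s y| < e) -> ~ A t.

End Defs.

Definition Kinf {R : realType} (g : R -> R) :=
  g 0 = 0 /\
  (forall x, 0 <= x -> forall e : R, 0 < e -> exists d : R, 0 < d /\
      forall y, 0 <= y -> `|y - x| < d -> `|g y - g x| < e) /\
  (forall x y, 0 <= x -> x < y -> g x < g y) /\
  (forall M : R, exists x, 0 <= x /\ M < g x).

Definition Gain {R : realType} {I : countType} (Ii : I -> set I)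
  (gam : I -> I -> R -> R) (mu : I -> (I -> R) -> \bar R) (s : I -> R) : I -> R :=
  fun i => fine (mu i (fun j => if j \in Ii i then gam i j (s j) else 0)).

Definition gain_operator_data {R : realType} {I : countType} (Ii : I -> set I)
  (gam : I -> I -> R -> R) (mu : I -> (I -> R) -> \bar R) :=
  (forall i, finite_set (Ii i) /\ ~ Ii i i) /\
  (forall i j, Ii i j -> Kinf (gam i j)) /\
  (forall r, 0 <= r -> forall e : R, 0 < e -> exists d : R, 0 < d /\
      forall i j r', Ii i j -> 0 <= r' -> `|r' - r| <= d ->
        `|gam i j r' - gam i j r| <= e) /\
  (forall i s, linf_plus s -> (0 <= mu i s)%E) /\
  (exists xi : R -> R, Kinf xi /\ forall i,
      mu i (fun _ => 0) = 0%E /\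
      forall s, linf_plus s -> ((xi (linf_norm s))%:E <= mu i s)%E) /\
  (forall i s t, linf_plus s -> linf_plus t -> fle s t -> (mu i s <= mu i t)%E) /\
  (forall (J : set I), finite_set J -> forall i,
      (forall s, linf_plus s -> (forall k, ~ J k -> s k = 0) -> mu i s \is a fin_num) /\
      (forall s, linf_plus s -> (forall k, ~ J k -> s k = 0) ->
         forall e : R, 0 < e -> exists d : R, 0 < d /\
         forall t, linf_plus t -> (forall k, ~ J k -> t k = 0) ->
           linf_norm (fun k => t k - s k) <= d ->
           `|fine (mu i t) - fine (mu i s)| <= e)) /\
  (* (M4): for every norm-bounded set (w.l.o.g. a ball of radius M) *)
  (forall (M e : R), 0 < e -> exists d : R, 0 < d /\
      forall s0 s, linf_plus s0 -> linf_norm s0 <= M -> linf_plus s ->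
        linf_norm (fun k => s k - s0 k) <= d ->
        forall i, `|fine (mu i (restr s (Ii i))) - fine (mu i (restr s0 (Ii i)))| <= e).

Definition assumptionA {R : realType} {I : countType} (Ii : I -> set I)
  (gam : I -> I -> R -> R) :=
  (exists eta : R -> R, Kinf eta /\
     forall i j, Ii i j -> forall r, 0 <= r -> eta r <= gam i j r) /\
  (forall i, Ii i !=set0).

(* N^+_i(1): vertices reachable from i by a directed path of length <= 1 *)
Definition Nplus1 {I : countType} (Ii : I -> set I) (i : I) : set I :=
  [set j | j = i \/ Ii j i].

Definition Psi {R : realType} {I : countType} (Gam : (I -> R) -> I -> R) : set (I -> R) :=
  [set s | linf_plus s /\ fle (Gam s) s].

Definition GATT {R : realType} {I : countType} (Gam : (I -> R) -> I -> R) :=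
  forall s, linf_plus s -> (fun n : nat => linf_norm (iter n Gam s)) @ \oo --> (0 : R).

Definition cofinal {R : realType} {I : countType} (A : set (I -> R)) :=
  forall s, linf_plus s -> exists2 s', A s' & fle s s'.

Definition coercive {R : realType} {I : countType} (A : set (I -> R)) :=
  exists phi : R -> R, Kinf phi /\
    forall s, A s -> fle (fun i => phi (linf_norm s) * @ones R I i) s.

Definition C0_path_of_decay {R : realType} {I : countType}
  (Gam : (I -> R) -> I -> R) (sigma : R -> I -> R) :=
  (forall r, 0 <= r -> Psi Gam (sigma r)) /\
  (exists phimin phimax : R -> R, Kinf phimin /\ Kinf phimax /\
     forall r, 0 <= r ->
       fle (fun i => phimin r * @ones R I i) (sigma r) /\
       fle (sigma r) (fun i => phimax r * @ones R I i)) /\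
  (forall r1 r2, 0 <= r1 -> r1 <= r2 -> fle (sigma r1) (sigma r2)) /\
  (forall r, 0 <= r -> forall e : R, 0 < e -> exists d : R, 0 < d /\
     forall r', 0 <= r' -> `|r' - r| < d -> linf_norm (fun i => sigma r' i - sigma r i) < e).

(* sigma is the linear interpolation of the complete orbit (s^n)_{n in Z}:
   s^n sits at parameter 2^(-n), sigma is affine on each [2^(-n-1), 2^(-n)],
   and sigma(0) = 0 (the limit of s^n as n -> +oo). *)
Definition interpolates {R : realType} {I : countType}
  (sn : int -> I -> R) (sigma : R -> I -> R) :=
  sigma 0 = (fun _ => 0) /\
  forall (n : int) (th : R), 0 <= th <= 1 ->
    sigma ((1 - th) * (2 : R) ^ (- (n + 1)) + th * (2 : R) ^ (- n)) =
    (fun i => (1 - th) * sn (n + 1) i + th * sn n i).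

(* For each k pick a in A whose orbit stays above 1 at a fixed coordinate i0
   for more than k steps (A is cofinal) and then, by GATT, drops to at most 1
   at some time m_k.  Coercivity of A bounds the windows
   Gamma^(m_k + n)(a), |n| <= k, uniformly in k: forwards through the value
   at i0, backwards through Assumption A, since every coordinate feeds some
   Gamma_i.  A coordinatewise limit along an ultrafilter is then a complete
   orbit (s^n) that is decreasing, coercive and bounded away from 0.  GATT
   gives s^n -> 0 as n -> +oo and forces s^n to be unbounded as n -> -oo,
   since otherwise its increasing limit would be a nonzero fixed point.
   Placing s^n at 2^-n and interpolating linearly yields a monotone
   continuous path; it stays in Psi(Gamma) because Gamma is monotone and maps
   each segment below its lower endpoint, and it is squeezed between
   phi (sigma (r / 2))_i0 * r / (1 + r) and r + ||sigma r||. *)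

From HB Require Import structures.
From mathcomp Require Import all_boot all_order all_algebra.
From mathcomp Require Import all_classical all_reals all_analysis.
From mathcomp Require Import finmap.
From mathcomp Require Import zify ring lra.
Set Implicit Arguments. Unset Strict Implicit. Unset Printing Implicit Defensive.
Import Order.TTheory GRing.Theory Num.Theory.
Import numFieldNormedType.Exports.
Local Open Scope classical_set_scope.
Local Open Scope ring_scope.

Section ContinuityOnNonneg.
Variable R : realType.
Implicit Types (f g h : R -> R) (x y : R).

Definition nneg_cont_at f x := forall e : R, 0 < e -> exists d : R, 0 < d /\
  forall y, 0 <= y -> `|y - x| < d -> `|f y - f x| < e.

Lemma nneg_cont_at_lipschitz f x :
  (forall y, 0 <= y -> `|f y - f x| <= `|y - x|) -> nneg_cont_at f x.
Proof.
by move=> fL e e0; exists e; split=> // y y0 yx; apply: le_lt_trans (fL y y0) yx.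
Qed.

Lemma nneg_cont_atD f g x :
  nneg_cont_at f x -> nneg_cont_at g x -> nneg_cont_at (f \+ g) x.
Proof.
move=> fc gc e e0; have e20 : 0 < e / 2 by lra.
have [d1 [d10 hd1]] := fc _ e20; have [d2 [d20 hd2]] := gc _ e20.
exists (Num.min d1 d2); split => [|y y0]; first by rewrite lt_min d10.
rewrite lt_min => /andP[yd1 yd2] /=.
have -> : f y + g y - (f x + g x) = (f y - f x) + (g y - g x) by ring.
apply: le_lt_trans (ler_normD _ _) _.
by have := hd1 y y0 yd1; have := hd2 y y0 yd2; lra.
Qed.

Lemma nneg_cont_atM f h x : (forall y, 0 <= y -> `|h y| <= 1) ->
  nneg_cont_at f x -> nneg_cont_at h x -> nneg_cont_at (f \* h) x.
Proof.
move=> h1 fc hc e e0; set c := `|f x| + 1.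
have c0 : 0 < c by rewrite /c; have := normr_ge0 (f x); lra.
have e20 : 0 < e / 2 by lra.
have ec0 : 0 < e / 2 / c by rewrite divr_gt0.
have [d1 [d10 hd1]] := fc _ e20; have [d2 [d20 hd2]] := hc _ ec0.
exists (Num.min d1 d2); split => [|y y0]; first by rewrite lt_min d10.
rewrite lt_min => /andP[yd1 yd2] /=.
have -> : f y * h y - f x * h x = (f y - f x) * h y + f x * (h y - h x) by ring.
apply: le_lt_trans (ler_normD _ _) _; rewrite !normrM.
have fy : `|f y - f x| * `|h y| <= `|f y - f x|.
  by rewrite ler_piMr ?normr_ge0 ?h1.
have hy : `|f x| * `|h y - h x| <= `|f x| * (e / 2 / c).
  by rewrite ler_wpM2l ?normr_ge0 // ltW ?hd2.
have fc2 : `|f x| * (e / 2 / c) <= e / 2.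
  by rewrite mulrCA ler_piMr ?(ltW e20) // ler_pdivrMr // mul1r /c; lra.
by have := hd1 y y0 yd1; lra.
Qed.

Lemma nneg_cont_at_comp g f x : (forall y, 0 <= y -> 0 <= f y) ->
  nneg_cont_at g (f x) -> nneg_cont_at f x -> nneg_cont_at (g \o f) x.
Proof.
move=> f0 gc fc e e0; have [d1 [d10 hd1]] := gc _ e0.
have [d2 [d20 hd2]] := fc _ d10; exists d2; split => // y y0 yx.
exact: hd1 (f0 y y0) (hd2 y y0 yx).
Qed.

End ContinuityOnNonneg.

Section KinfTheory.
Variable R : realType.
Implicit Types (g : R -> R) (x y : R).

Lemma Kinf_cont g x : Kinf g -> 0 <= x -> nneg_cont_at g x.
Proof. by move=> [_ [gc _]]; apply: gc. Qed.

Lemma Kinf_lt g x y : Kinf g -> 0 <= x -> x < y -> g x < g y.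
Proof. by move=> [_ [_ [gi _]]]; apply: gi. Qed.

Lemma Kinf_le g x y : Kinf g -> 0 <= x -> x <= y -> g x <= g y.
Proof.
move=> gK x0; rewrite le_eqVlt => /predU1P[->//|xy].
exact/ltW/(Kinf_lt gK).
Qed.

Lemma Kinf_ge0 g x : Kinf g -> 0 <= x -> 0 <= g x.
Proof. by move=> gK x0; have [g0 _] := gK; rewrite -g0; apply: Kinf_le. Qed.

Lemma Kinf_gt0 g x : Kinf g -> 0 < x -> 0 < g x.
Proof. by move=> gK x0; have [g0 _] := gK; rewrite -g0; apply: Kinf_lt. Qed.

Lemma Kinf_unbounded g M : Kinf g -> exists x, 0 <= x /\ M < g x.
Proof. by move=> [_ [_ [_ gu]]]; apply: gu. Qed.

Lemma Kinf_sublevel_bounded g M : Kinf g ->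
  exists B, 0 <= B /\ forall x, 0 <= x -> g x <= M -> x <= B.
Proof.
move=> gK; have [B [B0 MB]] := Kinf_unbounded M gK; exists B; split => // x x0 gxM.
rewrite leNgt; apply/negP => /(Kinf_lt gK B0); rewrite ltNge => /negP; apply.
exact: le_trans gxM (ltW MB).
Qed.

Lemma Kinf_comp_unbounded g h M : Kinf g -> Kinf h -> exists x, 0 <= x /\ M < g (h x).
Proof.
move=> gK hK; have [u [u0 Mu]] := Kinf_unbounded M gK.
have [x [x0 ux]] := Kinf_unbounded u hK; exists x; split => //.
exact: lt_le_trans Mu (Kinf_le gK u0 (ltW ux)).
Qed.

Lemma Kinf_cvg g {T} (F : set_system T) {FF : Filter F} (x : T -> R) y :
  Kinf g -> (forall t, 0 <= x t) -> 0 <= y -> x @ F --> y -> (g \o x) @ F --> g y.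
Proof.
move=> gK x0 y0 /cvgrPdist_lt xy; apply/cvgrPdist_lt => e e0.
have [d [d0 hd]] := Kinf_cont gK y0 e0.
by apply: filterS (xy d d0) => t ht; rewrite distrC hd // distrC.
Qed.

End KinfTheory.

Section Shrink.
Context {R : realType}.
Implicit Types (x y : R).

Definition shrink x := x / (1 + x).

Lemma shrink0 : shrink 0 = 0.
Proof. by rewrite /shrink mul0r. Qed.

Lemma shrinkB x y : 0 <= x -> 0 <= y ->
  shrink y - shrink x = (y - x) / ((1 + x) * (1 + y)).
Proof. by move=> x0 y0; rewrite /shrink; field; rewrite !lt0r_neq0 //; lra. Qed.

Lemma shrink_ge0 x : 0 <= x -> 0 <= shrink x.
Proof. by move=> x0; rewrite divr_ge0 //; lra. Qed.

Lemma shrink_le1 x : 0 <= x -> shrink x <= 1.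
Proof. by move=> x0; rewrite ler_pdivrMr ?mul1r; lra. Qed.

Lemma shrink_ge_half x : 1 <= x -> 1 / 2 <= shrink x.
Proof. by move=> x1; rewrite ler_pdivlMr; lra. Qed.

Lemma shrink_lt x y : 0 <= x -> x < y -> shrink x < shrink y.
Proof.
move=> x0 xy; rewrite -subr_gt0 shrinkB //; last by lra.
by rewrite divr_gt0 ?mulr_gt0; lra.
Qed.

Lemma shrink_lipschitz x y : 0 <= x -> 0 <= y -> `|shrink y - shrink x| <= `|y - x|.
Proof.
move=> x0 y0; rewrite shrinkB // normrM normfV.
rewrite (ger0_norm (_ : 0 <= (1 + x) * (1 + y))); last by rewrite mulr_ge0 //; lra.
rewrite ler_pdivrMr; last by rewrite mulr_gt0 //; lra.
by have := normr_ge0 (y - x); have := mulr_ge0 x0 y0; nra.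
Qed.

End Shrink.

Section SupNorm.
Variables (R : realType) (I : countType).
Implicit Types (s u v : I -> R).

Lemma linf_norm_ge s j : bounded_fam s -> `|s j| <= linf_norm s.
Proof.
move=> [M hM]; apply: ub_le_sup; last by exists j.
by exists M => _ [i _ <-].
Qed.

Lemma linf_norm_le s d : 0 <= d -> (forall i, `|s i| <= d) -> linf_norm s <= d.
Proof.
move=> d0 sd; rewrite /linf_norm.
have [[ne _]|ns] := pselect (has_sup [set `|s i| | i in [set: I]]).
  by apply: ge_sup => // _ [i _ <-].
by rewrite sup_out.
Qed.

Lemma linf_norm_ge0 s : 0 <= linf_norm s.
Proof.
rewrite /linf_norm.
have [[[_ [j _ _]] ub]|ns] := pselect (has_sup [set `|s i| | i in [set: I]]).
  by apply: le_trans (normr_ge0 (s j)) (ub_le_sup ub _); exists j.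
by rewrite sup_out.
Qed.

Lemma linf_norm0 : linf_norm (fun _ : I => 0 : R) = 0.
Proof.
apply/eqP; rewrite eq_le linf_norm_ge0 andbT.
by apply: linf_norm_le => // i; rewrite normr0.
Qed.

Lemma linf_norm_homo u v : (forall i, 0 <= u i) -> fle u v -> bounded_fam v ->
  linf_norm u <= linf_norm v.
Proof.
move=> u0 uv vb; apply: linf_norm_le (linf_norm_ge0 _) _ => i.
rewrite ger0_norm //; apply: le_trans (uv i) _.
exact: le_trans (ler_norm _) (linf_norm_ge i vb).
Qed.

Lemma bounded_famB u v : bounded_fam u -> bounded_fam v ->
  bounded_fam (fun i => u i - v i).
Proof.
move=> [Mu hu] [Mv hv]; exists (Mu + Mv) => i.
exact: le_trans (ler_normB _ _) (lerD (hu i) (hv i)).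
Qed.

Lemma linf_norm_lipschitz u v : bounded_fam u -> bounded_fam v ->
  `|linf_norm u - linf_norm v| <= linf_norm (fun i => u i - v i).
Proof.
move=> ub vb; set D := linf_norm (fun i => u i - v i).
have hD i : `|u i - v i| <= D by exact: linf_norm_ge (bounded_famB ub vb).
have D0 : 0 <= D by exact: linf_norm_ge0.
have le_shift (w w' : I -> R) : bounded_fam w' -> (forall i, `|w i| <= `|w' i| + D) ->
    linf_norm w <= linf_norm w' + D.
  move=> w'b ww'; apply: linf_norm_le => [|i]; first by rewrite addr_ge0 ?linf_norm_ge0.
  exact: le_trans (ww' i) (lerD (linf_norm_ge i w'b) (lexx D)).
have h1 : linf_norm u <= linf_norm v + D.
  apply: le_shift => // i; rewrite -[u i](subrK (v i)) addrC.
  exact: le_trans (ler_normD _ _) (lerD (lexx _) (hD i)).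
have h2 : linf_norm v <= linf_norm u + D.
  apply: le_shift => // i; rewrite -[v i](subrKC (u i)) -opprB.
  by apply: le_trans (ler_normB _ _) _; rewrite lerD2l hD.
by rewrite ler_norml; apply/andP; split; lra.
Qed.

Lemma finite_support_bounded (J : set I) s : finite_set J ->
  (forall k, ~ J k -> s k = 0) -> bounded_fam s.
Proof.
move=> /finite_fsetP [X ->] sX; exists (\sum_(j <- X) `|s j|) => i.
have [iX|iX] := boolP (i \in X); first by rewrite (big_fsetD1 i) //= lerDl sumr_ge0.
by rewrite sX ?normr0 ?sumr_ge0 //; apply/negP.
Qed.

End SupNorm.

Section Dyadic.
Context {R : realType}.
Implicit Types (m n : int) (r : R).

Definition dyad n : R := 2 ^ (- n).

Lemma dyad_gt0 n : 0 < dyad n.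
Proof. exact: exprz_gt0. Qed.

Lemma dyadS n : dyad n = 2 * dyad (n + 1).
Proof. by rewrite /dyad opprD expfzDr ?pnatr_eq0 // exprN1 mulrCA divff ?mulr1. Qed.

Lemma dyad_le m n : (dyad n <= dyad m) = (m <= n).
Proof. by rewrite /dyad ler_eXz2l ?ltr1n // lerN2. Qed.

Lemma dyad_lt m n : (dyad n < dyad m) = (m < n).
Proof. by rewrite /dyad ltr_eXz2l ?ltr1n // ltrN2. Qed.

Lemma dyad_small r : 0 < r -> exists N : nat, dyad N%:Z < r.
Proof.
move=> r0; set N := Num.bound r^-1; exists N.
have ri : 0 <= r^-1 by rewrite invr_ge0 ltW.
have Nr : r^-1 < 2 ^+ N.
  apply: lt_le_trans (archi_boundP ri) _.
  by rewrite -natrX ler_nat ltnW // ltn_expl.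
by rewrite /dyad -exprnN -[r]invrK ltf_pV2 ?posrE ?exprn_gt0 // invr_gt0.
Qed.

Lemma dyad_large r : exists M : nat, r <= dyad (- M%:Z).
Proof.
set M := Num.bound `|r|; exists M; rewrite /dyad opprK.
have Mr : `|r| < 2 ^+ M.
  apply: lt_le_trans (archi_boundP (normr_ge0 r)) _.
  by rewrite -natrX ler_nat ltnW // ltn_expl.
exact: le_trans (ler_norm r) (ltW Mr).
Qed.

Lemma dyadic_segment_exists r : 0 < r -> exists n, dyad (n + 1) < r <= dyad n.
Proof.
move=> r0; have [N rN] := dyad_small r0; have [M Mr] := dyad_large r.
suff descend (k : nat) n : r <= dyad n -> dyad (n + k%:Z) < r ->
    exists m, dyad (m + 1) < r <= dyad m.
  by apply: (descend (N + M)%N (- M%:Z) Mr); have -> : - M%:Z + (N + M)%N%:Z = N by lia.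
elim: k n => [|k IH] n rn nk; first by move: nk; rewrite addr0 ltNge rn.
have [r1|r1] := ltP (dyad (n + 1)) r; first by exists n; rewrite r1 rn.
by apply: IH r1 _; rewrite -addrA -PoszD add1n.
Qed.

Lemma dyadic_segment_unique r m n :
  dyad (m + 1) < r <= dyad m -> dyad (n + 1) < r <= dyad n -> m = n.
Proof.
move=> /andP[m1 m2] /andP[n1 n2]; apply/eqP; rewrite eq_le.
by rewrite -ltzD1 -dyad_lt (lt_le_trans n1 m2) -ltzD1 -dyad_lt (lt_le_trans m1 n2).
Qed.

Definition dyadic_index r : int := xget 0 [set n | dyad (n + 1) < r <= dyad n].

Lemma dyadic_indexP r : 0 < r ->
  dyad (dyadic_index r + 1) < r <= dyad (dyadic_index r).
Proof. by move=> r0; apply: (xgetPex 0 (dyadic_segment_exists r0)). Qed.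

Lemma dyadic_indexW r : 0 < r ->
  dyad (dyadic_index r + 1) <= r <= dyad (dyadic_index r).
Proof. by move=> /dyadic_indexP /andP[/ltW -> ->]. Qed.

End Dyadic.

Lemma ultra_cvg_in_segment (R : realType) (U : set_system nat) (UU : UltraFilter U)
    (x : nat -> R) (a b : R) :
  U [set k | a <= x k <= b] -> exists l, a <= l <= b /\ x @ U --> l.
Proof.
move=> Uab; have PF : ProperFilter (x @ U) by apply: fmap_proper_filter.
have Uxab : (x @ U) `[a, b]%classic.
  change (U (x @^-1` `[a, b]%classic)).
  by apply: filterS Uab => k; rewrite /= in_itv.
have [l [/= lab lcl]] := @segment_compact R a b (x @ U) PF Uxab.
exists l; split; first by move: lab; rewrite in_itv.
move=> B Bl; have [//|UnB] := in_ultra_setVsetC (x @^-1` B) UU.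
by have [q [nBq Bq]] := lcl (~` B) B UnB Bl.
Qed.

Section GainOperator.
Variables (R : realType) (I : countType).
Variables (Ii : I -> set I) (gam : I -> I -> R -> R) (mu : I -> (I -> R) -> \bar R).
Variables (xi eta : R -> R).
Hypothesis Ii_finite : forall i, finite_set (Ii i).
Hypothesis gamK : forall i j, Ii i j -> Kinf (gam i j).
Hypothesis xiK : Kinf xi.
Hypothesis M1 : forall i, mu i (fun _ => 0) = 0%E /\
  forall s, linf_plus s -> ((xi (linf_norm s))%:E <= mu i s)%E.
Hypothesis M2 : forall i s t, linf_plus s -> linf_plus t -> fle s t -> (mu i s <= mu i t)%E.
Hypothesis M3 : forall (J : set I), finite_set J -> forall i,
  (forall s, linf_plus s -> (forall k, ~ J k -> s k = 0) -> mu i s \is a fin_num) /\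
  (forall s, linf_plus s -> (forall k, ~ J k -> s k = 0) ->
     forall e : R, 0 < e -> exists d : R, 0 < d /\
     forall t, linf_plus t -> (forall k, ~ J k -> t k = 0) ->
       linf_norm (fun k => t k - s k) <= d -> `|fine (mu i t) - fine (mu i s)| <= e).
Hypothesis etaK : Kinf eta.
Hypothesis gam_ge_eta : forall i j, Ii i j -> forall r, 0 <= r -> eta r <= gam i j r.
Hypothesis Ii_neq0 : forall i, Ii i !=set0.
Hypothesis Ii_cover : forall j, exists i, Ii i j.

Local Notation Gam := (Gain Ii gam mu).

Definition nonneg (s : I -> R) := forall j, 0 <= s j.

Definition gain_arg (s : I -> R) i : I -> R :=
  fun j => if j \in Ii i then gam i j (s j) else 0.

Lemma gain_arg_out s i k : ~ Ii i k -> gain_arg s i k = 0.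
Proof. by move=> nik; rewrite /gain_arg ifF //; apply/negP => /set_mem. Qed.

Lemma gain_arg_plus s i : nonneg s -> linf_plus (gain_arg s i).
Proof.
move=> s0; split; last exact: finite_support_bounded (Ii_finite i) (@gain_arg_out s i).
move=> j; rewrite /gain_arg; case: ifPn => // /set_mem ij.
exact: Kinf_ge0 (gamK ij) (s0 j).
Qed.

Lemma mu_gain_arg_fin s i : nonneg s -> mu i (gain_arg s i) \is a fin_num.
Proof.
by move=> s0; apply: (M3 (Ii_finite i) i).1; [exact: gain_arg_plus|exact: gain_arg_out].
Qed.

Lemma Gain_ge_xi s i : nonneg s -> xi (linf_norm (gain_arg s i)) <= Gam s i.
Proof.
move=> s0; have := (M1 i).2 _ (gain_arg_plus i s0).
by rewrite -(fineK (mu_gain_arg_fin i s0)) lee_fin.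
Qed.

Lemma Gain_ge0 s : nonneg s -> nonneg (Gam s).
Proof.
move=> s0 i; apply: le_trans (Gain_ge_xi i s0).
exact: Kinf_ge0 xiK (linf_norm_ge0 _).
Qed.

Lemma Gain_ge_input s i j : nonneg s -> Ii i j -> xi (eta (s j)) <= Gam s i.
Proof.
move=> s0 ij; apply: le_trans (Gain_ge_xi i s0).
apply: Kinf_le xiK (Kinf_ge0 etaK (s0 j)) _.
apply: le_trans (gam_ge_eta ij (s0 j)) _.
have := linf_norm_ge j (gain_arg_plus i s0).2.
by rewrite /gain_arg (mem_set ij) ger0_norm // (Kinf_ge0 (gamK ij) (s0 j)).
Qed.

Lemma Gain_ge_const s t : nonneg s -> 0 <= t -> (forall j, t <= s j) ->
  forall i, xi (eta t) <= Gam s i.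
Proof.
move=> s0 t0 ts i; have [j ij] := Ii_neq0 i; apply: le_trans (Gain_ge_input s0 ij).
exact: Kinf_le xiK (Kinf_ge0 etaK t0) (Kinf_le etaK t0 (ts j)).
Qed.

Lemma Gain_homo s t : nonneg s -> fle s t -> fle (Gam s) (Gam t).
Proof.
move=> s0 st; have t0 : nonneg t by move=> j; exact: le_trans (s0 j) (st j).
move=> i; apply: fine_le; [exact: mu_gain_arg_fin|exact: mu_gain_arg_fin|].
apply: M2; [exact: gain_arg_plus|exact: gain_arg_plus|] => j.
rewrite /gain_arg; case: ifPn => // /set_mem ij.
exact: Kinf_le (gamK ij) (s0 j) (st j).
Qed.

Lemma Gain0 : Gam (fun _ => 0) = (fun _ => 0).
Proof.
apply/funext => i; rewrite /Gain.
have -> : (fun j => if j \in Ii i then gam i j 0 else 0) = (fun _ => 0 : R).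
  by apply/funext => j; case: ifPn => // /set_mem ij; case: (gamK ij).
by rewrite (M1 i).1.
Qed.

(* Each s_j enters some Gam_i, and Gam s i >= xi (eta (s j)). *)
Lemma Gain_sublevel_bounded U : exists B, forall s, nonneg s ->
  (forall i, Gam s i <= U) -> forall j, s j <= B.
Proof.
have [x [x0 Ux]] := Kinf_comp_unbounded U xiK etaK; exists x => s s0 sU j.
rewrite leNgt; apply/negP => xs; have [i ij] := Ii_cover j.
have := Gain_ge_input s0 ij; rewrite leNgt => /negP; apply.
apply: le_lt_trans (sU i) (lt_trans Ux _).
exact: Kinf_lt xiK (Kinf_ge0 etaK x0) (Kinf_lt etaK x0 xs).
Qed.

Lemma Gain_cvg {T} (F : set_system T) {FF : Filter F} (x : T -> I -> R) y i :
  (forall t, nonneg (x t)) -> nonneg y ->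
  (forall j, Ii i j -> (fun t => x t j) @ F --> y j) ->
  (fun t => Gam (x t) i) @ F --> Gam y i.
Proof.
move=> x0 y0 xy; apply/cvgrPdist_le => e e0.
have [d [d0 hd]] := (M3 (Ii_finite i) i).2 _ (gain_arg_plus i y0)
  (@gain_arg_out y i) e e0.
have [X IiX] := finite_fsetP.1 (Ii_finite i).
have near_arg : \forall t \near F, forall j, j \in X ->
    `|gam i j (x t j) - gam i j (y j)| < d.
  apply: filterS (@filter_bigI T I X (fun j => [set t |
      `|gam i j (x t j) - gam i j (y j)| < d]) F FF _) => [t /= ht j jX|j jX].
    exact: ht.
  have ij : Ii i j by rewrite IiX.
  have [d' [d'0 hd']] := Kinf_cont (gamK ij) (y0 j) d0.
  move/cvgrPdist_lt: (xy j ij) => /(_ _ d'0); apply: filterS => t ht.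
  by apply: hd'; [exact: x0|rewrite distrC].
apply: filterS near_arg => t ht; rewrite distrC.
apply: hd; [exact: gain_arg_plus|exact: gain_arg_out|].
apply: linf_norm_le (ltW d0) _ => j; rewrite /gain_arg.
case: ifPn => [/set_mem|_]; last by rewrite subrr normr0 ltW.
by rewrite IiX => /ht /ltW.
Qed.

Lemma GATT_fixpoint_eq0 l : GATT Gam -> linf_plus l -> Gam l = l -> linf_norm l = 0.
Proof.
move=> gatt lp fix_l; have iter_l n : iter n Gam l = l by elim: n => //= n ->.
by have := gatt l lp; under eq_fun do rewrite iter_l; apply: cvg_unique (cvg_cst _).
Qed.

Section OrbitsInA.
Variables (A : set (I -> R)) (phi : R -> R) (i0 : I).
Hypothesis A_Psi : A `<=` Psi Gam.
Hypothesis A_invariant : forall s, A s -> A (Gam s).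
Hypothesis A_cofinal : cofinal A.
Hypothesis phiK : Kinf phi.
Hypothesis A_coercive : forall s, A s -> fle (fun i => phi (linf_norm s) * @ones R I i) s.
Hypothesis Gam_GATT : GATT Gam.

Lemma A_nonneg s : A s -> nonneg s.
Proof. by move=> /A_Psi [[]]. Qed.

Lemma A_bounded s : A s -> bounded_fam s.
Proof. by move=> /A_Psi [[]]. Qed.

Lemma A_phi_le s i j : A s -> phi (s j) <= s i.
Proof.
move=> As; have := A_coercive As i; rewrite /ones mulr1; apply: le_trans.
apply: Kinf_le phiK (A_nonneg As j) _.
by have := linf_norm_ge j (A_bounded As); rewrite ger0_norm //; exact: A_nonneg.
Qed.

Lemma iter_A m s : A s -> A (iter m Gam s).
Proof. by move=> As; elim: m => //= m; apply: A_invariant. Qed.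

Lemma iter_Gain_ge0 m s : nonneg s -> nonneg (iter m Gam s).
Proof. by move=> s0; elim: m => //= m; apply: Gain_ge0. Qed.

Lemma iter_A_decr m p s : A s -> fle (iter (m + p) Gam s) (iter m Gam s).
Proof.
move=> As; elim: p => [|p IH] j; first by rewrite addn0.
rewrite addnS /=; apply: le_trans (IH j); apply: (A_Psi (iter_A _ As)).2.
Qed.

Lemma iter_Gain_ge m C : exists t, 0 <= t /\ forall y, nonneg y ->
  (forall j, t <= y j) -> forall j, C <= iter m Gam y j.
Proof.
elim: m C => [|m IH] C.
  by exists `|C|; split => // y _ ty j; apply: le_trans (ler_norm C) (ty j).
have [C' [C'0 hC']] := Kinf_comp_unbounded C xiK etaK.
have [t [t0 ht]] := IH C'; exists t; split => // y y0 ty j /=.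
apply: le_trans (ltW hC') (Gain_ge_const (iter_Gain_ge0 m y0) C'0 _ j).
by move=> k; apply: ht.
Qed.

(* Start high enough (A is cofinal) to stay above 1 at i0 for k steps; by GATT
   the orbit later drops to at most 1, and am.2 is the first time it does. *)
Lemma crossing_orbit k : exists am : (I -> R) * nat, [/\ A am.1, (k < am.2)%N,
  iter am.2 Gam am.1 i0 <= 1 & 1 < iter am.2.-1 Gam am.1 i0].
Proof.
have [t [t0 ht]] := iter_Gain_ge k 2.
have [a Aa ta] : exists2 a, A a & fle (fun _ => t) a.
  by apply: A_cofinal; split => //; exists `|t| => _.
have big m : (m <= k)%N -> 1 < iter m Gam a i0.
  move=> mk; have := iter_A_decr m (k - m) Aa i0; rewrite subnKC //.
  by apply: lt_le_trans; apply: lt_le_trans (ht _ (A_nonneg Aa) ta i0); rewrite ltr1n.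
have small : exists m, iter m Gam a i0 <= 1.
  move/cvgrPdist_lt: (Gam_GATT (conj (A_nonneg Aa) (A_bounded Aa))) => /(_ 1 ltr01).
  move=> [N _ /(_ N (leqnn N))]; rewrite /= sub0r normrN ger0_norm ?linf_norm_ge0 //.
  move=> aN; exists N; apply/ltW/(le_lt_trans _ aN).
  exact: le_trans (ler_norm _) (linf_norm_ge _ (A_bounded (iter_A N Aa))).
case: (ex_minnP small) => m am1 am_min; exists (a, m).
have km : (k < m)%N by rewrite ltnNge; apply/negP => /big; rewrite ltNge am1.
split => //=; rewrite ltNge; apply/negP => /am_min; lia.
Qed.

Definition coercive_orbit (s : int -> I -> R) :=
  [/\ forall n, linf_plus (s n), forall n, s (n + 1) = Gam (s n),
      forall n, fle (s (n + 1)) (s n), forall n i j, phi (s n j) <= s n i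
    & exists2 c, 0 < c & forall j, c <= s 0 j].

Section Windows.
Variables (a : nat -> I -> R) (m : nat -> nat).
Hypothesis a_A : forall k, A (a k).
Hypothesis m_gt : forall k, (k < m k)%N.
Hypothesis cross_le1 : forall k, iter (m k) Gam (a k) i0 <= 1.
Hypothesis cross_gt1 : forall k, 1 < iter (m k).-1 Gam (a k) i0.

(* Meaningful only for |n| <= k < m k, where m k + n >= 0. *)
Definition window k (n : int) := iter (absz ((m k)%:Z + n)) Gam (a k).

Lemma window_A k n : A (window k n).
Proof. exact: iter_A. Qed.

Lemma window_ge0 k n : nonneg (window k n).
Proof. exact: A_nonneg (window_A k n). Qed.

Lemma window_step k n : (absz n <= k)%N -> window k (n + 1) = Gam (window k n).
Proof.
move=> nk; have := m_gt k; rewrite /window => km.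
by have -> : absz ((m k)%:Z + (n + 1)) = (absz ((m k)%:Z + n)).+1 by lia.
Qed.

Lemma window_decr k n : (absz n <= k)%N -> fle (window k (n + 1)) (window k n).
Proof. by move=> nk; rewrite window_step //; apply: (A_Psi (window_A k n)).2. Qed.

Lemma window0 k : window k 0 = iter (m k) Gam (a k).
Proof. by rewrite /window addr0 absz_nat. Qed.

Lemma window0_ge k j : xi (eta (phi 1)) <= window k 0 j.
Proof.
rewrite window0 -(prednK (leq_ltn_trans (leq0n k) (m_gt k))) /=.
have Ak := iter_A (m k).-1 (a_A k).
apply: Gain_ge_const (A_nonneg Ak) (Kinf_ge0 phiK ler01) _ j => j'.
exact: le_trans (Kinf_le phiK ler01 (ltW (cross_gt1 k))) (A_phi_le j' i0 Ak).
Qed.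

Lemma window_bounded_nat (p : nat) : exists B, forall k j, window k p%:Z j <= B.
Proof.
have [B [B0 hB]] := Kinf_sublevel_bounded 1 phiK; exists B => k j.
have := iter_A_decr (m k) p (a_A k) j; rewrite /window -PoszD absz_nat.
move/le_trans; apply; apply: hB; first exact: iter_Gain_ge0 (A_nonneg (a_A k)) j.
exact: le_trans (A_phi_le i0 j (iter_A _ (a_A k))) (cross_le1 k).
Qed.

Lemma window_bounded_negnat (p : nat) :
  exists B, forall k, (p <= k)%N -> forall j, window k (- p%:Z) j <= B.
Proof.
elim: p => [|p [B hB]].
  by have [B hB] := window_bounded_nat 0; exists B => k _ j; apply: hB.
have [B' hB'] := Gain_sublevel_bounded B; exists B' => k pk j.
apply: hB' (window_ge0 _ _) _ _ => i; rewrite -window_step; last by lia.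
have -> : - (p.+1)%:Z + 1 = - p%:Z by lia.
by apply: hB; lia.
Qed.

Lemma window_bounded n : exists B, forall k, (absz n <= k)%N -> forall j, window k n j <= B.
Proof.
case: n => p; first by have [B hB] := window_bounded_nat p; exists B => k _; apply: hB.
by have [B hB] := window_bounded_negnat p.+1; exists B => k pk; rewrite NegzE; apply: hB.
Qed.

Context {G : set_system nat} {GU : UltraFilter G}.
Hypothesis G_finer : forall P : set nat, (\forall k \near \oo, P k) -> G P.

Lemma G_ge N : G [set k | (N <= k)%N].
Proof. by apply: G_finer; exists N. Qed.

Lemma window_cvg : exists s : int -> I -> R,
  forall n j, (fun k => window k n j) @ G --> s n j.
Proof.
suff lim_ex : forall nj : int * I, exists l : R, (fun k => window k nj.1 nj.2) @ G --> l.
  by have [s hs] := choice lim_ex; exists (fun n j => s (n, j)) => n j; apply: (hs (n, j)).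
move=> [n j]; have [B hB] := window_bounded n.
have G_in : G [set k | 0 <= window k n j <= B].
  by apply: filterS (G_ge (absz n)) => k nk; rewrite /= (window_ge0 k n j) hB.
by have [l [_ hl]] := ultra_cvg_in_segment GU G_in; exists l.
Qed.

Lemma le_G_lim (u v : nat -> R) (x y : R) N : u @ G --> x -> v @ G --> y ->
  (forall k, (N <= k)%N -> u k <= v k) -> x <= y.
Proof. by move=> ux vy uv; apply: ler_cvg_to ux vy (filterS uv (G_ge N)). Qed.

Lemma window_limit_orbit : exists s, coercive_orbit s.
Proof.
have [s s_lim] := window_cvg; exists s.
have s_ge0 n : nonneg (s n).
  move=> j; apply: (le_G_lim (N := 0%N) (cvg_cst _) (s_lim n j)) => k _.
  exact: window_ge0.
split.
- move=> n; split; first exact: s_ge0.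
  have [B hB] := window_bounded n; exists B => j.
  rewrite (ger0_norm (s_ge0 n j)).
  by apply: (le_G_lim (N := absz n) (s_lim n j) (cvg_cst B)) => k nk; exact: hB.
- move=> n; apply/funext => i.
  have Gam_lim : (fun k => Gam (window k n) i) @ G --> Gam (s n) i.
    by apply: Gain_cvg => [k||j _]; [exact: window_ge0|exact: s_ge0|exact: s_lim].
  have shift_lim : (fun k => window k (n + 1) i) @ G --> Gam (s n) i.
    apply: cvg_trans Gam_lim; apply: near_eq_cvg.
    by apply: filterS (G_ge (absz n)) => k /= nk; rewrite window_step.
  exact: cvg_unique (s_lim (n + 1) i) shift_lim.
- move=> n i; apply: (le_G_lim (N := absz n) (s_lim (n + 1) i) (s_lim n i)) => k nk.
  exact: window_decr nk i.
- move=> n i j; apply: (le_G_lim (N := 0%N) _ (s_lim n i)) => [|k _].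
    exact: Kinf_cvg phiK (fun k => window_ge0 k n j) (s_ge0 n j) (s_lim n j).
  exact: A_phi_le i j (window_A k n).
- exists (xi (eta (phi 1))); first exact/Kinf_gt0/Kinf_gt0/Kinf_gt0.
  move=> j; apply: (le_G_lim (N := 0%N) (cvg_cst _) (s_lim 0 j)) => k _.
  exact: window0_ge.
Qed.

End Windows.

Lemma complete_orbit_exists : exists s, coercive_orbit s.
Proof.
have [am am_cross] := choice crossing_orbit.
have [G [GU G_finer]] := @ultraFilterLemma nat \oo _.
apply: (@window_limit_orbit (fst \o am) (snd \o am)) G_finer => k; by case: (am_cross k).
Qed.

Section DecayPath.
Variables (s : int -> I -> R) (c : R).
Hypothesis s_plus : forall n, linf_plus (s n).
Hypothesis s_step : forall n, s (n + 1) = Gam (s n).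
Hypothesis s_decr : forall n, fle (s (n + 1)) (s n).
Hypothesis s_phi_le : forall n i j, phi (s n j) <= s n i.
Hypothesis c_gt0 : 0 < c.
Hypothesis s0_ge : forall j, c <= s 0 j.

Lemma orbit_ge0 n : nonneg (s n).
Proof. exact: (s_plus n).1. Qed.

Lemma orbit_bounded n : bounded_fam (s n).
Proof. exact: (s_plus n).2. Qed.

Lemma orbit_homo m n : m <= n -> fle (s n) (s m).
Proof.
move=> mn; have -> : n = m + (absz (n - m))%:Z by lia.
elim: (absz _) => [|k IH] j; first by rewrite addr0.
by rewrite -addn1 PoszD addrA; apply: le_trans (s_decr _ j) (IH j).
Qed.

Lemma orbit_nat_gt0 (p : nat) : exists2 t, 0 < t & forall j, t <= s p j.
Proof.
elim: p => [|p [t t0 ht]]; first by exists c.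
exists (xi (eta t)); first exact/Kinf_gt0/Kinf_gt0.
by move=> j; rewrite -addn1 PoszD s_step; apply: Gain_ge_const (orbit_ge0 _) (ltW t0) ht j.
Qed.

Lemma orbit_gt0 n j : 0 < s n j.
Proof.
case: n => p; first by have [t t0 ht] := orbit_nat_gt0 p; apply: lt_le_trans t0 (ht j).
apply: lt_le_trans c_gt0 (le_trans (s0_ge j) (orbit_homo _ j)).
by rewrite NegzE oppr_le0.
Qed.

Lemma orbit_iter p n : iter p Gam (s n) = s (n + p%:Z).
Proof. by elim: p => [|p IH]; rewrite ?addr0 //= IH -s_step -addn1 PoszD addrA. Qed.

Lemma orbit_norm_small e : 0 < e ->
  exists N : nat, forall n, N%:Z <= n -> linf_norm (s n) < e.
Proof.
move=> e0; move/cvgrPdist_lt: (Gam_GATT (s_plus 0)) => /(_ e e0) [N _ sN].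
exists N => n Nn; apply: le_lt_trans (linf_norm_homo (orbit_ge0 _) (orbit_homo Nn)
  (orbit_bounded _)) _.
have := sN N (leqnn N); rewrite /= sub0r normrN ger0_norm ?linf_norm_ge0 //.
by rewrite orbit_iter add0r.
Qed.

Lemma backward_orbit_fixpoint B : (forall (p : nat) j, s (- p%:Z) j <= B) ->
  exists2 l, linf_plus l & Gam l = l /\ fle (s 0) l.
Proof.
move=> sB; pose u j (p : nat) := s (- p%:Z) j.
have u_homo j : nondecreasing_seq (u j).
  by move=> p q pq; apply: orbit_homo; rewrite lerN2 lez_nat.
have u_ub j : has_ubound (range (u j)) by exists B => _ [p _ <-]; apply: sB.
pose l j := sup (range (u j)).
have u_lim j : u j @ \oo --> l j by apply: nondecreasing_cvgn.
have s0_l j : s 0 j <= l j.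
  by rewrite -oppr0; apply: ub_le_sup; [exact: u_ub|exists 0%N].
have l_ge0 : nonneg l by move=> j; apply: le_trans (orbit_ge0 0 j) (s0_l j).
exists l.
  split => //; exists B => j; rewrite ger0_norm //; apply: ge_sup; first by exists (u j 0%N), 0%N.
  by move=> _ [p _ <-]; apply: sB.
split => //; apply/funext => i.
have Gam_lim : (fun p => Gam (s (- p%:Z)) i) @ \oo --> Gam l i.
  by apply: Gain_cvg => [p||j _]; [exact: orbit_ge0|exact: l_ge0|exact: u_lim].
have shift : (fun p : nat => Gam (s (- p.+1%:Z)) i) = u i.
  by apply/funext => p; rewrite /u -s_step; congr (s _ i); lia.
move: Gam_lim; rewrite -cvg_shiftS /= shift => Gam_lim.
exact: cvg_unique _ Gam_lim (u_lim i).
Qed.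

Lemma orbit_backward_unbounded C : exists p : nat, C < s (- p%:Z) i0.
Proof.
have [//|no_p] := pselect (exists p : nat, C < s (- p%:Z) i0).
have [B [_ hB]] := Kinf_sublevel_bounded C phiK.
have sB p j : s (- p%:Z) j <= B.
  apply: hB (orbit_ge0 _ j) (le_trans (s_phi_le _ i0 j) _).
  by rewrite leNgt; apply/negP => Cs; apply: no_p; exists p.
have [l lp [fix_l s0l]] := backward_orbit_fixpoint sB.
have l_gt0 : 0 < linf_norm l.
  apply: lt_le_trans (orbit_gt0 0 i0) (le_trans (s0l i0) _).
  exact: le_trans (ler_norm _) (linf_norm_ge i0 lp.2).
by move: l_gt0; rewrite (GATT_fixpoint_eq0 Gam_GATT lp fix_l) ltxx.
Qed.

Implicit Types (a b r : R) (m n : int).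

Definition interp n a : I -> R :=
  fun i => s (n + 1) i + (a / dyad (n + 1) - 1) * (s n i - s (n + 1) i).

Definition sigma r : I -> R :=
  if r <= 0 then fun _ => 0 else interp (dyadic_index r) r.

Lemma interp_weight n a : dyad (n + 1) <= a <= dyad n -> 0 <= a / dyad (n + 1) - 1 <= 1.
Proof.
move=> /andP[na an]; have q0 : (0 : R) < dyad (n + 1) := dyad_gt0 _.
rewrite subr_ge0 ler_pdivlMr // mul1r na /= lerBlDr ler_pdivrMr //.
by move: an; rewrite dyadS; lra.
Qed.

Lemma interp_between n a i : dyad (n + 1) <= a <= dyad n ->
  s (n + 1) i <= interp n a i <= s n i.
Proof.
move=> /interp_weight /andP[w0 w1]; rewrite /interp.
set w := _ - 1; set d := s n i - _.
have d0 : 0 <= d by rewrite subr_ge0 s_decr.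
by rewrite lerDl mulr_ge0 //= -lerBrDl -/d -[leRHS]mul1r ler_wpM2r.
Qed.

Lemma interp_top n : interp n (dyad n) = s n.
Proof.
apply/funext => i; rewrite /interp dyadS mulfK ?lt0r_neq0 ?dyad_gt0 //.
have -> : 2 - 1 = 1 :> R by lra.
by rewrite mul1r addrC subrK.
Qed.

Lemma interp_bot n : interp n (dyad (n + 1)) = s (n + 1).
Proof.
by apply/funext => i; rewrite /interp divff ?lt0r_neq0 ?dyad_gt0 // subrr mul0r addr0.
Qed.

Lemma sigma_on_segment n a : dyad (n + 1) <= a <= dyad n -> sigma a = interp n a.
Proof.
move=> /andP[na an]; have a0 : 0 < a := lt_le_trans (dyad_gt0 _) na.
rewrite /sigma leNgt a0 /=; have idx := dyadic_indexP a0.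
have [na'|an'] := ltP (dyad (n + 1)) a.
  by rewrite (dyadic_segment_unique idx (_ : dyad (n + 1) < a <= dyad n)) // na' an.
have an1 : a = dyad (n + 1) by apply/eqP; rewrite eq_le an' na.
have n1a : dyad (n + 1 + 1) < a <= dyad (n + 1).
  by rewrite an1 lexx andbT dyad_lt ltzD1.
by rewrite (dyadic_segment_unique idx n1a) an1 interp_top interp_bot.
Qed.

Lemma sigma0 : sigma 0 = fun _ => 0.
Proof. by rewrite /sigma lexx. Qed.

Lemma sigma_dyad n : sigma (dyad n) = s n.
Proof.
by rewrite (@sigma_on_segment n) ?interp_top // lexx andbT ltW // dyad_lt ltzD1.
Qed.

Lemma sigma_ge0 r : nonneg (sigma r).
Proof.
move=> i; have [r0|r0] := lerP r 0; first by rewrite /sigma r0.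
have /(interp_between i) /andP[+ _] := dyadic_indexW r0.
rewrite -(sigma_on_segment (dyadic_indexW r0)); apply: le_trans; exact: orbit_ge0.
Qed.

Lemma sigma_homo r1 r2 : 0 <= r1 -> r1 <= r2 -> fle (sigma r1) (sigma r2).
Proof.
move=> r10 r12 i; have [r1_le0|r1_gt0] := lerP r1 0.
  by rewrite /sigma r1_le0; apply: sigma_ge0.
have r2_gt0 := lt_le_trans r1_gt0 r12.
have seg1 := dyadic_indexW r1_gt0; have seg2 := dyadic_indexW r2_gt0.
rewrite (sigma_on_segment seg1) (sigma_on_segment seg2).
set n1 := dyadic_index r1 in seg1 *; set n2 := dyadic_index r2 in seg2 *.
have n21 : n2 <= n1.
  have /andP[n1r1 _] := dyadic_indexP r1_gt0; have /andP[_ r2n2] := seg2.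
  by rewrite -ltzD1 -(@dyad_lt R) (lt_le_trans n1r1 (le_trans r12 r2n2)).
move: n21; rewrite le_eqVlt => /predU1P[->|n21].
  rewrite /interp lerD2l; apply: ler_wpM2r; first by rewrite subr_ge0 s_decr.
  by rewrite lerD2r ler_pM2r // invr_gt0 dyad_gt0.
have /andP[_ hi1] := interp_between i seg1; have /andP[lo2 _] := interp_between i seg2.
by apply: le_trans hi1 (le_trans _ lo2); apply: orbit_homo; lia.
Qed.

Lemma sigma_le_orbit r n : 0 <= r -> r <= dyad n -> fle (sigma r) (s n).
Proof. by move=> r0 rn; rewrite -sigma_dyad; apply: sigma_homo. Qed.

Lemma orbit_le_sigma r n : dyad n <= r -> fle (s n) (sigma r).
Proof. by move=> nr; rewrite -sigma_dyad; apply: sigma_homo (ltW (dyad_gt0 n)) nr. Qed.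

Lemma sigma_bounded r : bounded_fam (sigma r).
Proof.
have [r_le0|r_gt0] := lerP r 0; first by exists 0 => i; rewrite /sigma r_le0 normr0.
have [M hM] := orbit_bounded (dyadic_index r); exists M => i.
rewrite (ger0_norm (sigma_ge0 r i)); apply: le_trans (le_trans (ler_norm _) (hM i)).
by apply: sigma_le_orbit (ltW r_gt0) _ i; case/andP: (dyadic_indexW r_gt0).
Qed.

Lemma sigma_Psi r : 0 <= r -> Psi Gam (sigma r).
Proof.
move=> r0; split; first by split; [exact: sigma_ge0|exact: sigma_bounded].
have [r_le0|r_gt0] := lerP r 0; first by rewrite /sigma r_le0 Gain0 => i.
have /andP[nr rn] := dyadic_indexW r_gt0.
move=> i; apply: le_trans (Gain_homo (sigma_ge0 r) (sigma_le_orbit r0 rn) i) _.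
by rewrite -s_step; apply: orbit_le_sigma nr i.
Qed.

Lemma sigma_interpolates : interpolates s sigma.
Proof.
split=> [|n th /andP[th0 th1]]; first exact: sigma0.
have q0 : (0 : R) < dyad (n + 1) := dyad_gt0 _.
rewrite -/(dyad (n + 1)) -/(dyad n) (dyadS n).
have -> : (1 - th) * dyad (n + 1) + th * (2 * dyad (n + 1)) = dyad (n + 1) * (1 + th).
  by ring.
rewrite (@sigma_on_segment n); last first.
  rewrite (dyadS n).
  by rewrite ler_pMr ?lerDl //= mulrC ler_pM2r //; lra.
apply/funext => i; rewrite /interp [dyad (n + 1) * _]mulrC mulfK ?lt0r_neq0 //.
have -> : 1 + th - 1 = th by ring.
by ring.
Qed.

Definition slope n := linf_norm (s n) / dyad (n + 1).

Lemma slope_ge0 n : 0 <= slope n.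
Proof. by rewrite divr_ge0 ?linf_norm_ge0 // ltW ?dyad_gt0. Qed.

Lemma sigma_lipschitz_segment n a b i :
  dyad (n + 1) <= a <= dyad n -> dyad (n + 1) <= b <= dyad n ->
  `|sigma b i - sigma a i| <= `|b - a| * slope n.
Proof.
move=> na nb; rewrite (sigma_on_segment na) (sigma_on_segment nb) /interp.
have q0 : (0 : R) < dyad (n + 1) := dyad_gt0 _.
set q := dyad (n + 1); set d := s n i - s (n + 1) i.
have -> : s (n + 1) i + (b / q - 1) * d - (s (n + 1) i + (a / q - 1) * d) =
    (b - a) * (d / q) by ring.
rewrite normrM ler_wpM2l ?normr_ge0 // normrM (gtr0_norm (_ : 0 < q^-1)) ?invr_gt0 //.
rewrite ler_wpM2r ?invr_ge0 ?(ltW q0) //.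
have d0 : 0 <= d by rewrite subr_ge0 s_decr.
rewrite (ger0_norm d0); apply: le_trans (linf_norm_ge i (orbit_bounded n)).
by apply: le_trans (ler_norm _); rewrite /d; have := orbit_ge0 (n + 1) i; lra.
Qed.

Lemma sigma_lipschitz_two_segments n a b i :
  dyad (n + 1) <= a <= dyad (n - 1) -> dyad (n + 1) <= b <= dyad (n - 1) ->
  `|sigma b i - sigma a i| <= `|b - a| * (slope n + slope (n - 1)).
Proof.
wlog ab : a b / a <= b.
  move=> hw ha hb; have [ab|/ltW ba] := leP a b; first exact: hw.
  by rewrite distrC (distrC b); apply: hw ba hb ha.
move=> /andP[na _] /andP[_ bn]; set P : R := dyad n.
have s0 := slope_ge0 n; have s1 := slope_ge0 (n - 1).
have P_n1 : dyad (n - 1 + 1) = P by rewrite subrK.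
have P_le : P <= dyad (n - 1) by rewrite /P dyad_le; lia.
have qP : dyad (n + 1) <= P by rewrite /P dyad_le; lia.
have [bP|Pb] := leP b P.
  apply: le_trans (sigma_lipschitz_segment (n := n) i _ _) _.
  - by rewrite na (le_trans ab bP).
  - by rewrite (le_trans na ab) bP.
  by rewrite ler_wpM2l ?normr_ge0 //; lra.
have [aP|Pa] := leP a P; last first.
  apply: le_trans (sigma_lipschitz_segment (n := n - 1) i _ _) _.
  - by rewrite P_n1 (ltW Pa) (le_trans ab bn).
  - by rewrite P_n1 (ltW (lt_le_trans Pa ab)) bn.
  by rewrite ler_wpM2l ?normr_ge0 //; lra.
have h1 : `|sigma P i - sigma a i| <= `|P - a| * slope n.
  by apply: sigma_lipschitz_segment; rewrite ?na ?aP ?qP ?lexx.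
have h2 : `|sigma b i - sigma P i| <= `|b - P| * slope (n - 1).
  by apply: sigma_lipschitz_segment; rewrite P_n1 ?lexx ?P_le ?(ltW Pb) ?bn.
rewrite (ger0_norm (_ : 0 <= P - a)) ?subr_ge0 // in h1.
rewrite (ger0_norm (_ : 0 <= b - P)) ?subr_ge0 ?(ltW Pb) // in h2.
apply: le_trans (ler_distD (sigma P i) _ _) _.
rewrite (ger0_norm (_ : 0 <= b - a)) ?subr_ge0 //; nra.
Qed.

Lemma sigma_cont r : 0 <= r -> forall e : R, 0 < e -> exists d : R, 0 < d /\
  forall r', 0 <= r' -> `|r' - r| < d -> linf_norm (fun i => sigma r' i - sigma r i) < e.
Proof.
move=> r0 e e0; have [r_le0|r_gt0] := lerP r 0.
  have -> : r = 0 by apply/eqP; rewrite eq_le r_le0 r0.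
  have [N sN] := orbit_norm_small e0; exists (dyad N); split => [|r' r'0]; first exact: dyad_gt0.
  rewrite subr0 ger0_norm // sigma0 => r'N; apply: le_lt_trans (sN N (lexx _)).
  under eq_fun do rewrite subr0.
  exact: linf_norm_homo (sigma_ge0 r') (sigma_le_orbit r'0 (ltW r'N)) (orbit_bounded N).
have /andP[qr rP] := dyadic_indexP r_gt0; set n := dyadic_index r in qr rP.
set L := slope n + slope (n - 1).
have L0 : 0 <= L by rewrite addr_ge0 ?slope_ge0.
have P0 : (0 : R) < dyad n := dyad_gt0 _.
have P2 : dyad (n - 1) = 2 * dyad n :> R by rewrite (dyadS (n - 1)) subrK.
exists (Num.min (r - dyad (n + 1)) (Num.min (dyad n) (e / (L + 1)))).
split; first by rewrite !lt_min subr_gt0 qr P0 divr_gt0 //; lra.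
move=> r' r'0; rewrite !lt_min => /andP[d1 /andP[d2 d3]].
have seg_r : dyad (n + 1) <= r <= dyad (n - 1) by rewrite (ltW qr) P2; lra.
have seg_r' : dyad (n + 1) <= r' <= dyad (n - 1).
  by have := ler_norm (r' - r); have := ler_norm (r - r'); rewrite distrC P2; lra.
apply: le_lt_trans (linf_norm_le (_ : 0 <= `|r' - r| * L) _) _.
- by rewrite mulr_ge0.
- by move=> i; apply: sigma_lipschitz_two_segments.
apply: le_lt_trans (ler_wpM2r L0 (ltW d3)) _.
by rewrite mulrAC ltr_pdivrMr ?ltr_pM2l //; lra.
Qed.

Lemma sigma_norm_cont r : 0 <= r -> nneg_cont_at (fun r => linf_norm (sigma r)) r.
Proof.
move=> r0 e e0; have [d [d0 hd]] := sigma_cont r0 e0; exists d; split => // y y0 yr.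
exact: le_lt_trans (linf_norm_lipschitz (sigma_bounded y) (sigma_bounded r)) (hd y y0 yr).
Qed.

Lemma sigma_half_cont j r : 0 <= r -> nneg_cont_at (fun r => sigma (r / 2) j) r.
Proof.
move=> r0 e e0; have r20 : 0 <= r / 2 by rewrite divr_ge0.
have [d [d0 hd]] := sigma_cont r20 e0.
exists (2 * d); split => [|y y0 yr]; first by rewrite mulr_gt0.
apply: le_lt_trans (linf_norm_ge j (bounded_famB (sigma_bounded _) (sigma_bounded _))) _.
apply: hd; first by rewrite divr_ge0.
have -> : y / 2 - r / 2 = (y - r) / 2 by ring.
by rewrite normrM (gtr0_norm (_ : 0 < 2^-1 :> R)) ?invr_gt0 //; lra.
Qed.

Definition phimax r := r + linf_norm (sigma r).

Lemma phimax_Kinf : Kinf phimax.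
Proof.
split; first by rewrite /phimax sigma0 linf_norm0 addr0.
split.
  move=> x x0; apply: nneg_cont_atD (sigma_norm_cont x0).
  exact: nneg_cont_at_lipschitz.
split.
  move=> x y x0 xy; rewrite /phimax ltr_leD //.
  exact: linf_norm_homo (sigma_ge0 x) (sigma_homo x0 (ltW xy)) (sigma_bounded y).
move=> M; exists (`|M| + 1); split; first by rewrite addr_ge0.
by rewrite /phimax; have := ler_norm M; have := linf_norm_ge0 (sigma (`|M| + 1)); lra.
Qed.

Lemma sigma_le_phimax r i : 0 <= r -> sigma r i <= phimax r.
Proof.
move=> r0; apply: le_trans (ler_norm _) (le_trans (linf_norm_ge i (sigma_bounded r)) _).
by rewrite lerDr.
Qed.

(* Halving r puts sigma (r / 2) below the orbit point s^(n+1) that sigma r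
   dominates, so coercivity of the orbit gives phimin r <= sigma r; the factor
   shrink r makes phimin strictly increasing. *)
Definition gmin r := phi (sigma (r / 2) i0).

Definition phimin r := gmin r * shrink r.

Lemma gmin_ge0 r : 0 <= gmin r.
Proof. exact: Kinf_ge0 phiK (sigma_ge0 _ _). Qed.

Lemma gmin_homo x y : 0 <= x -> x <= y -> gmin x <= gmin y.
Proof.
move=> x0 xy; apply: Kinf_le phiK (sigma_ge0 _ _) _.
by apply: sigma_homo; lra.
Qed.

Lemma gmin_gt0 r : 0 < r -> 0 < gmin r.
Proof.
move=> r0; apply: Kinf_gt0 phiK _; have r20 : 0 < r / 2 by lra.
have /andP[nr _] := dyadic_indexW r20.
exact: lt_le_trans (orbit_gt0 _ i0) (orbit_le_sigma nr i0).
Qed.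

Lemma phimin_le_sigma r i : 0 <= r -> phimin r <= sigma r i.
Proof.
move=> r0; have [r_le0|r_gt0] := lerP r 0.
  have -> : r = 0 by apply/eqP; rewrite eq_le r_le0 r0.
  by rewrite /phimin shrink0 mulr0; apply: sigma_ge0.
apply: le_trans (_ : gmin r <= _).
  by rewrite /phimin ler_piMr ?gmin_ge0 ?shrink_le1.
have /andP[nr rn] := dyadic_indexW r_gt0; set n := dyadic_index r in nr rn.
apply: le_trans (le_trans (s_phi_le (n + 1) i i0) (orbit_le_sigma nr i)).
apply: Kinf_le phiK (sigma_ge0 _ _) (sigma_le_orbit _ _ i0); first lra.
by move: rn; rewrite (dyadS n); lra.
Qed.

Lemma phimin_Kinf : Kinf phimin.
Proof.
split; first by rewrite /phimin shrink0 mulr0.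
split.
  move=> x x0; apply: (@nneg_cont_atM _ gmin shrink) => [y y0||].
  - by rewrite ger0_norm ?shrink_le1 ?shrink_ge0.
  - apply: (@nneg_cont_at_comp _ phi (fun r => sigma (r / 2) i0)) => [y _||].
    + exact: sigma_ge0.
    + exact: Kinf_cont phiK (sigma_ge0 _ _).
    + exact: sigma_half_cont.
  - by apply: nneg_cont_at_lipschitz => y y0; apply: shrink_lipschitz.
split.
  move=> x y x0 xy; rewrite /phimin.
  apply: le_lt_trans (_ : gmin x * shrink x <= gmin y * shrink x) _.
    by rewrite ler_wpM2r ?shrink_ge0 ?gmin_homo // ltW.
  by rewrite ltr_pM2l ?gmin_gt0 ?shrink_lt //; apply: le_lt_trans x0 xy.
move=> M; have [u [u0 Mu]] := Kinf_unbounded (2 * M) phiK.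
have [p up] := orbit_backward_unbounded u.
have p0 : (0 : R) < dyad (- p%:Z) := dyad_gt0 _.
set y : R := 2 * dyad (- p%:Z) + 1; exists y; split; first by rewrite /y; lra.
have gy : phi u <= gmin y.
  apply: Kinf_le phiK u0 (le_trans (ltW up) (orbit_le_sigma _ i0)).
  by rewrite /y; lra.
have := shrink_ge_half (_ : 1 <= y); have := gmin_ge0 y; rewrite /phimin /y; nra.
Qed.

Lemma sigma_C0 : C0_path_of_decay Gam sigma.
Proof.
split; first exact: sigma_Psi.
split.
  exists phimin, phimax; split; first exact: phimin_Kinf.
  split; first exact: phimax_Kinf.
  by move=> r r0; split => i; rewrite /ones mulr1; [apply: phimin_le_sigma|apply: sigma_le_phimax].
by split; [exact: sigma_homo|exact: sigma_cont].
Qed.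

End DecayPath.

Lemma decay_path_exists : exists s0 : I -> R, int_linf_plus s0 /\ Psi Gam s0 /\
  exists sn : int -> I -> R, sn 0 = s0 /\ (forall n : int, sn (n + 1) = Gam (sn n)) /\
    exists sigma : R -> I -> R, interpolates sn sigma /\ C0_path_of_decay Gam sigma.
Proof.
have [s [s_plus s_step s_decr s_phi_le [c c0 s0c]]] := complete_orbit_exists.
exists (s 0); split; first by split; [exact: s_plus|exists c].
split; first by split; [exact: s_plus|rewrite -s_step; exact: s_decr].
exists s; do 2!split => //.
by exists (sigma s); split; [exact: sigma_interpolates|exact: sigma_C0 s0c].
Qed.

End OrbitsInA.
End GainOperator.

Lemma Nplus1_cover (I : countType) (Ii : I -> set I) :
  (forall i, Nplus1 Ii i `\` [set i] !=set0) -> forall j, exists i, Ii i j.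
Proof. by move=> hN j; have [k [[kj|kj] nk]] := hN j; [case: nk|exists k]. Qed.

Theorem theorem3p21 (R : realType) (I : countType) (hI : [set: I] !=set0)
  (Ii : I -> set I) (gam : I -> I -> R -> R) (mu : I -> (I -> R) -> \bar R)
  (hGam : gain_operator_data Ii gam mu)
  (A : set (I -> R))
  (hA : A `<=` Psi (Gain Ii gam mu) /\ weakstar_closed A /\
        (forall s, A s -> A (Gain Ii gam mu s)) /\ cofinal A /\ coercive A)
  (hGATT : GATT (Gain Ii gam mu))
  (hAssA : assumptionA Ii gam)
  (hN : forall i, Nplus1 Ii i `\` [set i] !=set0) :
  exists s0 : I -> R,
    int_linf_plus s0 /\ Psi (Gain Ii gam mu) s0 /\
    exists sn : int -> I -> R,
      sn 0 = s0 /\ (forall n : int, sn (n + 1) = Gain Ii gam mu (sn n)) /\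
      exists sigma : R -> I -> R,
        interpolates sn sigma /\ C0_path_of_decay (Gain Ii gam mu) sigma.
Proof.
move: hGam => [Ii_loopfree [gamK [_ [_ [[xi [xiK M1]] [M2 [M3 _]]]]]]].
move: hA => [A_Psi [_ [A_invariant [A_cofinal [phi [phiK A_coercive]]]]]].
move: hAssA => [[eta [etaK gam_ge_eta]] Ii_neq0].
have [i0 _] := hI.
have Ii_finite i : finite_set (Ii i) by case: (Ii_loopfree i).
exact: (decay_path_exists Ii_finite gamK xiK M1 M2 M3 etaK gam_ge_eta Ii_neq0
  (Nplus1_cover hN) i0 A_Psi A_invariant A_cofinal phiK A_coercive hGATT).
Qed.
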